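(* Let $n\ge3$ and $k>n$ be integers and let $X$ be the discrete-time Markov chain on $\mathbb{N}^{n-1}$ described in the context (which is then stable). If $\mathbf{Q}$ is a random vector distributed according to the stationary distribution of $X$, then $\mathbb{E}[|\mathbf{Q}|]<\infty$.
   Context: $\mathbb{N}=\{0,1,2,\dots\}$, $|\mathbf{x}|=x_1+\dots+x_{n-1}$. $\mathbf{0}$, $\mathbf{1}$ are the all-zero and all-one vectors of dimension $n-1$, $\mathbf{e}_l$ the $l$-th unit vector. For $j=0,\dots,n-1$, $R_j$ is the set of $\mathbf{x}\in\mathbb{N}^{n-1}$ with exactly $j$ zero entries. $X$ is the Markov chain on $\mathbb{N}^{n-1}$ with nonzero transition probabilities: from $\mathbf{x}\in R_0$, to $\mathbf{x}-\mathbf{1}$ w.p. $\frac{k-(n-1)}{k}$ and to $\mathbf{x}+\mathbf{e}_l$ w.p. $\frac1k$ ($l=1,\dots,n-1$); from $\mathbf{x}\in R_j$, $1\le j\le n-2$, to $\mathbf{x}+\mathbf{e}_l$ w.p. $\frac{k-(n-1-j)}{kj}$ if $x_l=0$ and w.p. $\frac1k$ if $x_l\ge1$; from $\mathbf{0}$ to $\mathbf{e}_l$ w.p. $\frac1{n-1}$. *)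

From HB Require Import structures.
From mathcomp Require Import all_boot all_order all_algebra.
From mathcomp Require Import all_classical all_reals.
From mathcomp Require Import ereal esum.
Unset Implicit Arguments. Unset Printing Implicit Defensive.
Import Order.TTheory GRing.Theory Num.Theory.
Local Open Scope ring_scope.

Definition state (n : nat) := {ffun 'I_n.-1 -> nat}.

Definition vnorm n (x : state n) : nat := (\sum_(l < n.-1) x l)%N.

(* number of zero entries: x is in R_j iff nzeros x = j *)
Definition nzeros n (x : state n) : nat := #|[set l : 'I_n.-1 | x l == 0%N]|.

(* x - 1 (only used for x in R_0) *)
Definition vdec n (x : state n) : state n := [ffun i => (x i).-1].

Definition vinc n (x : state n) (l : 'I_n.-1) : state n :=
  [ffun i => (x i + (i == l))%N].

Definition up_prob (R : realType) (n k : nat) (x : state n) (l : 'I_n.-1) : R :=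
  let j := nzeros n x in
  if j == n.-1 then 1 / (n.-1)%:R            (* x = 0 *)
  else if j == 0%N then 1 / k%:R              (* x in R_0 *)
  else if x l == 0%N then (k%:R - ((n.-1)%:R - j%:R)) / (k%:R * j%:R)
  else 1 / k%:R.

Definition trans (R : realType) (n k : nat) (x y : state n) : R :=
  (if (nzeros n x == 0%N) && (y == vdec n x)
   then (k%:R - (n.-1)%:R) / k%:R else 0)
  + \sum_(l < n.-1) (if y == vinc n x l then up_prob R n k x l else 0).

Definition stationary_distribution (R : realType) (n k : nat)
    (pi : state n -> R) : Prop :=
  (forall x, 0 <= pi x) /\
  (\esum_(x in [set: state n]) (pi x)%:E = 1%E) /\
  (forall y, (pi y)%:E = \esum_(x in [set: state n]) (pi x * trans R n k x y)%:E).

From HB Require Import structures.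
From mathcomp Require Import all_boot all_order all_algebra.
From mathcomp Require Import all_classical all_reals.
From mathcomp Require Import ereal esum.
From mathcomp Require Import ring lra zify.
Import Order.TTheory GRing.Theory Num.Theory.
Local Open Scope ring_scope.
Local Open Scope classical_set_scope.

(* Foster-Lyapunov drift argument.  Write d = n - 1 and S = |x|.  The quadratic form
     V x = (d + 1) \sum_l x_l^2 - S^2 = \sum_l x_l^2 + \sum_(i < j) (x_i - x_j)^2
   changes by d - 2S on the downward move x -> x - 1 and by d - 2S + 2(d + 1) x_l on
   the move x -> x + e_l, which has probability 1/k whenever x_l > 0.  So the mean
   increment of V is d - 2S + 2(d + 1) S / k, and since k >= d + 2 the function (k/2) V
   has drift at most k d / 2 - S.  Averaging this inequality against the stationary
   distribution gives E|Q| <= k d / 2; to keep every average finite, V is first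
   truncated at a level M, and M then grows along finite sets of states. *)

Lemma esumZl (R : realType) (T : choiceType) (S : set T) (r : R) (a : T -> \bar R) :
  0 <= r -> (forall i, (0 <= a i)%E) ->
  (\esum_(i in S) (r%:E * a i) = r%:E * \esum_(i in S) a i)%E.
Proof.
move=> r0 a0; rewrite /esum -ereal_supZl //; last first.
  by apply/set0P; exists (\sum_(x \in set0) a x)%E; exists set0 => //; exact: fsets_set0.
congr ereal_sup; apply/seteqP; split => y /=.
  move=> [X FX <-]; exists (\sum_(x \in X) a x)%E; first by exists X.
  by rewrite ge0_mule_fsumr.
by move=> [_ [X FX <-] <-]; exists X => //; rewrite ge0_mule_fsumr.
Qed.

Lemma esum_delta (R : realType) (T : choiceType) (z : T) (e : \bar R) :
  (0 <= e)%E -> (\esum_(y in [set: T]) (if y == z then e else 0) = e)%E.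
Proof.
move=> e0; rewrite (esumID [set z]); last by move=> i _; case: ifP.
rewrite setTI esum_set1 ?eqxx // esum1 ?adde0 // => y [_ /= yz].
by rewrite ifN //; apply/eqP.
Qed.

Lemma esum_swap (R : realType) (T1 T2 : choiceType) (a : T1 -> T2 -> \bar R) :
  (forall i j, (0 <= a i j)%E) ->
  (\esum_(i in [set: T1]) \esum_(j in [set: T2]) a i j =
   \esum_(j in [set: T2]) \esum_(i in [set: T1]) a i j)%E.
Proof.
move=> a0; rewrite !esum_esum //.
rewrite (reindex_esum ([set: T2] `*`` fun=> [set: T1]) _ (fun x => (x.2, x.1))) //.
split => //=.
- by move=> [i1 i2] [j1 j2] /= _ _ [] -> ->.
- by move=> [i1 i2] _ /=; exists (i2, i1).
Qed.

Section DriftCriterion.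
Context {R : realType} {T : choiceType} {mu : T -> R} {P : (T -> R) -> T -> R}.
Hypothesis mu_ge0 : forall x, 0 <= mu x.
Hypothesis mu_sum1 : (\esum_(x in [set: T]) (mu x)%:E = 1)%E.
Hypothesis P_le : forall f g x, (forall y, f y <= g y) -> P f x <= P g x.
Hypothesis P_cst : forall c x, P (fun=> c) x = c.
Hypothesis mu_invariant : forall g, (forall y, 0 <= g y) ->
  (\esum_(x in [set: T]) (mu x * P g x)%:E = \esum_(x in [set: T]) (mu x * g x)%:E)%E.

Lemma esum_mu_cst c : 0 <= c -> (\esum_(x in [set: T]) (mu x * c)%:E = c%:E)%E.
Proof.
move=> c0; under eq_esum do rewrite EFinM muleC.
by rewrite esumZl ?mu_sum1 ?mule1 // => x; rewrite lee_fin.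
Qed.

Lemma P_ge0 g x : (forall y, 0 <= g y) -> 0 <= P g x.
Proof. by move=> g0; rewrite -(P_cst 0 x); apply: P_le. Qed.

Context {V f : T -> R} {b : R}.
Hypotheses (V_ge0 : forall x, 0 <= V x) (f_ge0 : forall x, 0 <= f x) (b_ge0 : 0 <= b).
Hypothesis drift : forall x, P V x + f x <= V x + b.

Let Vmin M x := Num.min (V x) M.
Let f_below M x := if V x <= M then f x else 0.

Lemma drift_truncated M x : 0 <= M -> P (Vmin M) x + f_below M x <= Vmin M x + b.
Proof.
move=> M0; have PV : P (Vmin M) x <= P V x by apply: P_le => y; rewrite ge_min lexx.
have PM : P (Vmin M) x <= M.
  by rewrite -[leRHS](P_cst M x); apply: P_le => y; rewrite ge_min lexx orbT.
rewrite /f_below /Vmin; case: (lerP (V x) M) => [VM|/ltW MV].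
  by apply: le_trans (drift x); rewrite lerD2r.
by rewrite addr0; apply: le_trans PM _; rewrite lerDl.
Qed.

Lemma esum_f_below_le M : 0 <= M ->
  (\esum_(x in [set: T]) (mu x * f_below M x)%:E <= b%:E)%E.
Proof.
move=> M0; have Vmin_ge0 x : 0 <= Vmin M x by rewrite le_min V_ge0.
have f_below_ge0 x : 0 <= f_below M x by rewrite /f_below; case: ifP.
set G := (\esum_(x in [set: T]) (mu x * Vmin M x)%:E)%E.
have G_fin : G \is a fin_num.
  rewrite ge0_fin_numE; last by apply: esum_ge0 => x _; rewrite lee_fin mulr_ge0.
  apply: le_lt_trans (ltry M); rewrite -(esum_mu_cst _ M0); apply: le_esum => x _.
  by rewrite lee_fin ler_wpM2l // ge_min lexx orbT.
rewrite -(leeD2lE _ _ G_fin) {1}/G -mu_invariant // -esumD; first last.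
- by move=> x _; rewrite lee_fin mulr_ge0.
- by move=> x _; rewrite lee_fin mulr_ge0 ?P_ge0.
rewrite -(esum_mu_cst _ b_ge0) /G -esumD; first last.
- by move=> x _; rewrite lee_fin mulr_ge0.
- by move=> x _; rewrite lee_fin mulr_ge0.
apply: le_esum => x _; rewrite -!EFinD lee_fin -!mulrDr ler_wpM2l //.
exact: drift_truncated.
Qed.

Theorem esum_mu_le_drift : (\esum_(x in [set: T]) (mu x * f x)%:E <= b%:E)%E.
Proof.
apply: ge_ereal_sup => _ [X [finX _] <-].
pose M := \sum_(y \in X) V y.
have M0 : 0 <= M by apply: fsumr_ge0.
apply: le_trans (esum_f_below_le _ M0); apply: esum_ge; exists X => //.
rewrite (eq_fsbigr (fun y => (mu y * f_below M y)%:E)) // => y /[!inE] Xy.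
rewrite /f_below ifT //.
by rewrite /M (fsbigD1 y) //= lerDl fsumr_ge0.
Qed.

End DriftCriterion.

Lemma sqr_sum_le (R : realDomainType) (m : nat) (a : 'I_m -> R) :
  (\sum_(i < m) a i) ^+ 2 <= m%:R * \sum_(i < m) a i ^+ 2.
Proof.
have lagrange : \sum_(i < m) \sum_(j < m) (a i - a j) ^+ 2 =
    (m%:R * \sum_(i < m) a i ^+ 2 - (\sum_(i < m) a i) ^+ 2) *+ 2.
  have row i : \sum_(j < m) (a i - a j) ^+ 2 =
      a i ^+ 2 *+ m - (a i * \sum_(j < m) a j) *+ 2 + \sum_(j < m) a j ^+ 2.
    under eq_bigr do rewrite sqrrB.
    by rewrite big_split /= sumrB sumr_const card_ord mulr_sumr sumrMnl.
  under eq_bigr do rewrite row.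
  rewrite big_split /= sumrB !sumrMnl sumr_const card_ord -mulr_suml; ring.
have : 0 <= \sum_(i < m) \sum_(j < m) (a i - a j) ^+ 2.
  by do 2 (apply: sumr_ge0 => ? _); rewrite sqr_ge0.
by rewrite lagrange pmulrn_lge0 // subr_ge0.
Qed.

Section Lyapunov.
Variables (R : realType) (n : nat).
Local Notation d := n.-1.

Definition lyap (x : state n) : R :=
  d.+1%:R * \sum_(l < d) (x l)%:R ^+ 2 - (vnorm n x)%:R ^+ 2.

Lemma vnormE (x : state n) : (vnorm n x)%:R = \sum_(l < d) (x l)%:R :> R.
Proof. exact: natr_sum. Qed.

Lemma lyap_ge0 (x : state n) : 0 <= lyap x.
Proof.
have := @sqr_sum_le _ _ (fun l : 'I_d => (x l)%:R : R).
have : 0 <= \sum_(l < d) (x l)%:R ^+ 2 :> R by apply: sumr_ge0 => l _; rewrite sqr_ge0.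
rewrite /lyap vnormE -natr1; nra.
Qed.

Lemma big_vinc (F : nat -> R) (x : state n) l :
  \sum_(i < d) F (vinc n x l i) = \sum_(i < d) F (x i) + (F (x l).+1 - F (x l)).
Proof.
rewrite (bigD1 l) // [in RHS](bigD1 l) //= ffunE eqxx addn1.
rewrite (eq_bigr (fun i => F (x i))) => [|i /negbTE il]; last by rewrite ffunE il addn0.
ring.
Qed.

Lemma lyap_vinc (x : state n) l :
  lyap (vinc n x l) = lyap x + 2 * d.+1%:R * (x l)%:R - 2 * (vnorm n x)%:R + d%:R.
Proof.
rewrite /lyap !vnormE (big_vinc (fun m => m%:R ^+ 2)) (big_vinc (fun m => m%:R)).
rewrite -!natr1; ring.
Qed.

Lemma lyap_vdec (x : state n) : (forall i, 0 < x i)%N ->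
  lyap (vdec n x) = lyap x - 2 * (vnorm n x)%:R + d%:R.
Proof.
move=> x_gt0; have dec i : (vdec n x i)%:R = (x i)%:R - 1 :> R.
  by rewrite ffunE -[in RHS](prednK (x_gt0 i)) -natr1 addrK.
have sq i : ((x i)%:R - 1) ^+ 2 = (x i)%:R ^+ 2 - 2 * (x i)%:R + 1 :> R by ring.
rewrite /lyap !vnormE; under eq_bigr do rewrite dec sq.
under [X in _ - X ^+ 2]eq_bigr do rewrite dec.
rewrite big_split /= !sumrB -mulr_sumr !sumr_const card_ord -natr1; ring.
Qed.

End Lyapunov.

Section Chain.
Variables (R : realType) (n k : nat).
Hypotheses (hn : (3 <= n)%N) (hk : (n < k)%N).
Local Notation d := n.-1.

Lemma nzeros_le (x : state n) : (nzeros n x <= d)%N.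
Proof. by rewrite /nzeros -[X in (_ <= X)%N]card_ord max_card. Qed.

Lemma nzeros_lt (x : state n) l : x l != 0%N -> (nzeros n x < d)%N.
Proof.
move=> xl; rewrite /nzeros -[X in (_ < X)%N]card_ord -cardsT; apply: proper_card.
by apply/properP; split; [exact: finset.subsetT | exists l; rewrite ?inE].
Qed.

Lemma nzeros_eq0 (x : state n) l : nzeros n x = 0%N -> (0 < x l)%N.
Proof.
move/eqP; rewrite cards_eq0 => /eqP no_zero; rewrite lt0n; apply/negP => /eqP xl.
have : l \in [set i | x i == 0%N]%SET by rewrite inE xl.
by rewrite no_zero inE.
Qed.

Lemma sum_if_zero (x : state n) (A B : R) :
  \sum_(l < d) (if x l == 0%N then A else B) = A *+ nzeros n x + B *+ (d - nzeros n x).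
Proof.
rewrite (bigID (fun l => x l == 0%N)) /= (eq_bigr (fun=> A)) => [|l ->] //.
rewrite [X in _ + X](eq_bigr (fun=> B)) => [|l /negbTE ->] //.
have zeros : #|(fun l : 'I_d => x l == 0%N)| = nzeros n x by rewrite /nzeros cardsE.
have nonzeros : #|(fun l : 'I_d => x l != 0%N)| = (d - nzeros n x)%N.
  apply: (@addnI (nzeros n x)); rewrite subnKC ?nzeros_le // -zeros.
  rewrite -[RHS]card_ord -(cardC (fun l : 'I_d => x l == 0%N)).
  by congr (_ + _); apply: eq_card.
by rewrite !sumr_const zeros nonzeros.
Qed.

Lemma dS_lt_k : (d.+1 < k)%N.
Proof. by rewrite prednK // (leq_trans _ hn). Qed.

Lemma d_gt1 : (1 < d)%N.
Proof. by rewrite -ltnS prednK // (leq_trans _ hn). Qed.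

Lemma k_gt0 : 0 < k%:R :> R.
Proof. by rewrite ltr0n (leq_trans _ dS_lt_k). Qed.

Definition down_prob (x : state n) : R :=
  if nzeros n x == 0%N then (k%:R - d%:R) / k%:R else 0.

Lemma trans_split (x y : state n) : trans R n k x y =
  (if y == vdec n x then down_prob x else 0) +
  \sum_(l < d) (if y == vinc n x l then up_prob R n k x l else 0).
Proof. by rewrite /trans /down_prob; case: (nzeros n x == 0%N); case: (y == vdec n x). Qed.

Lemma down_prob_ge0 x : 0 <= down_prob x.
Proof.
rewrite /down_prob; case: ifP => // _.
by rewrite divr_ge0 ?ler0n // subr_ge0 ler_nat (leq_trans _ (ltnW dS_lt_k)).
Qed.

Lemma up_prob_ge0 x l : 0 <= up_prob R n k x l.
Proof.
rewrite /up_prob; do 3 (case: ifP => _; try by rewrite divr_ge0 ?ler0n).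
rewrite divr_ge0 ?mulr_ge0 ?ler0n // subr_ge0 lerBlDr -natrD ler_nat.
by have := nzeros_le x; have := dS_lt_k; lia.
Qed.

Lemma down_prob_neq0 x l : down_prob x != 0 -> (0 < x l)%N.
Proof.
rewrite /down_prob; have [/(nzeros_eq0 x l) // | _] := eqVneq (nzeros n x) 0%N.
by rewrite eqxx.
Qed.

Lemma prob_sum1 x : down_prob x + \sum_(l < d) up_prob R n k x l = 1.
Proof.
have k_neq0 : k%:R != 0 :> R by rewrite gt_eqF ?k_gt0.
have d_neq0 : d != 0%N by rewrite -lt0n ltnW ?d_gt1.
rewrite /down_prob /up_prob; have [->|not_full] := eqVneq (nzeros n x) d.
  rewrite (negbTE d_neq0) add0r sumr_const card_ord -[_ *+ d]mulr_natr.
  by rewrite div1r mulVf // pnatr_eq0.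
have [_|j_neq0] := eqVneq (nzeros n x) 0%N.
  by rewrite sumr_const card_ord -[_ *+ d]mulr_natr; field.
rewrite add0r sum_if_zero -[_ *+ nzeros n x]mulr_natr -[_ *+ (d - _)]mulr_natr.
have j_neq0R : (nzeros n x)%:R != 0 :> R by rewrite pnatr_eq0.
by rewrite natrB ?nzeros_le //; field; rewrite k_neq0 j_neq0R.
Qed.

Lemma up_prob_mul x l : up_prob R n k x l * (x l)%:R = (x l)%:R / k%:R.
Proof.
have [->|xl] := eqVneq (x l) 0%N; first by rewrite mulr0 mul0r.
rewrite /up_prob ifN; last by rewrite neq_ltn (nzeros_lt x l xl).
by rewrite (negbTE xl); case: ifP; rewrite mul1r mulrC.
Qed.

Definition step (g : state n -> R) (x : state n) : R :=
  down_prob x * g (vdec n x) + \sum_(l < d) up_prob R n k x l * g (vinc n x l).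

Lemma step_le f g x : (forall y, f y <= g y) -> step f x <= step g x.
Proof.
move=> fg; rewrite lerD ?ler_wpM2l ?down_prob_ge0 //.
by apply: ler_sum => l _; rewrite ler_wpM2l ?up_prob_ge0.
Qed.

Lemma step_cst c x : step (fun=> c) x = c.
Proof. by rewrite /step -mulr_suml -mulrDl prob_sum1 mul1r. Qed.

Lemma stepZ c g x : step (fun y => c * g y) x = c * step g x.
Proof.
rewrite /step mulrDr mulr_sumr mulrCA; congr (_ + _).
by apply: eq_bigr => l _; rewrite mulrCA.
Qed.

Lemma trans_ge0 x y : 0 <= trans R n k x y.
Proof.
rewrite trans_split addr_ge0 //; first by case: ifP; rewrite ?down_prob_ge0.
by apply: sumr_ge0 => l _; case: ifP; rewrite ?up_prob_ge0.
Qed.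

Lemma esum_trans (g : state n -> R) x : (forall y, 0 <= g y) ->
  (\esum_(y in [set: state n]) (trans R n k x y * g y)%:E = (step g x)%:E)%E.
Proof.
move=> g_ge0; pose move_to z p y : \bar R := if y == z then (p * g z)%:E else 0%E.
have move_to_ge0 z p y : 0 <= p -> (0 <= move_to z p y)%E.
  by move=> p0; rewrite /move_to; case: ifP; rewrite // lee_fin mulr_ge0.
have split_trans y : (trans R n k x y * g y)%:E = (move_to (vdec n x) (down_prob x) y +
    \sum_(l < d) move_to (vinc n x l) (up_prob R n k x l) y)%E.
  rewrite trans_split mulrDl mulr_suml EFinD -sumEFin /move_to.
  congr (_ + _)%E; first by case: eqP => [->|]; rewrite ?mul0r.
  by apply: eq_bigr => l _; case: eqP => [->|]; rewrite ?mul0r.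
under eq_esum do rewrite split_trans.
rewrite esumD; last 2 first.
- by move=> y _; apply: move_to_ge0; apply: down_prob_ge0.
- by move=> y _; rewrite sume_ge0 // => l _; apply: move_to_ge0; apply: up_prob_ge0.
rewrite esum_sum; last by move=> y l _ _; apply: move_to_ge0; apply: up_prob_ge0.
rewrite esum_delta ?lee_fin ?mulr_ge0 ?down_prob_ge0 //.
under eq_bigr do rewrite esum_delta ?lee_fin ?mulr_ge0 ?up_prob_ge0 //.
by rewrite sumEFin -EFinD.
Qed.

Lemma step_invariant pi : stationary_distribution R n k pi ->
  forall g, (forall y, 0 <= g y) ->
  (\esum_(x in [set: state n]) (pi x * step g x)%:E =
   \esum_(x in [set: state n]) (pi x * g x)%:E)%E.
Proof.
move=> [pi_ge0 [_ pi_stat]] g g_ge0.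
have flow_ge0 x y : (0 <= (pi x * (trans R n k x y * g y))%:E)%E.
  by rewrite lee_fin !mulr_ge0 ?trans_ge0.
transitivity (\esum_(x in [set: state n]) \esum_(y in [set: state n])
    (pi x * (trans R n k x y * g y))%:E)%E.
  apply: eq_esum => x _; rewrite EFinM -esum_trans // -esumZl //.
  by move=> y; rewrite lee_fin mulr_ge0 ?trans_ge0.
rewrite esum_swap //; apply: eq_esum => y _.
rewrite [RHS]EFinM muleC pi_stat -esumZl //; last first.
  by move=> x; rewrite lee_fin mulr_ge0 ?trans_ge0.
by apply: eq_esum => x _; rewrite -EFinM mulrA mulrC.
Qed.

Lemma step_lyap x : step (lyap R n) x = lyap R n x - 2 * (vnorm n x)%:R + d%:R +
  2 * d.+1%:R * (vnorm n x)%:R / k%:R.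
Proof.
have down : down_prob x * lyap R n (vdec n x) =
    down_prob x * (lyap R n x - 2 * (vnorm n x)%:R + d%:R).
  have [->|/down_prob_neq0 x_gt0] := eqVneq (down_prob x) 0; first by rewrite !mul0r.
  by rewrite lyap_vdec.
have up l : up_prob R n k x l * lyap R n (vinc n x l) =
    up_prob R n k x l * (lyap R n x - 2 * (vnorm n x)%:R + d%:R) +
    2 * d.+1%:R * ((x l)%:R / k%:R).
  by rewrite lyap_vinc -up_prob_mul; ring.
rewrite /step down (eq_bigr _ (fun l _ => up l)) big_split /= -mulr_suml -mulr_sumr.
by rewrite -mulr_suml -vnormE addrA -mulrDl prob_sum1 mul1r; ring.
Qed.

Lemma step_lyap_drift x :
  step (fun y => k%:R / 2 * lyap R n y) x + (vnorm n x)%:R <=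
  k%:R / 2 * lyap R n x + k%:R / 2 * d%:R.
Proof.
rewrite stepZ step_lyap -[d.+1%:R]natr1.
have kd : d%:R + 2 <= k%:R :> R by rewrite -natrD addn2 ler_nat dS_lt_k.
have k0 := k_gt0; have s0 : 0 <= (vnorm n x)%:R :> R by [].
set K := k%:R in k0 kd *; set D := d%:R in kd *; set S := (vnorm n x)%:R in s0 *.
have -> : K / 2 * (lyap R n x - 2 * S + D + 2 * (D + 1) * S / K) + S =
    K / 2 * lyap R n x + K / 2 * D - (K - D - 2) * S.
  by field; rewrite gt_eqF.
have : 0 <= (K - D - 2) * S by rewrite mulr_ge0 //; lra.
lra.
Qed.

End Chain.

Theorem proposition8p2 (R : realType) (n k : nat) (hn : (3 <= n)%N) (hk : (n < k)%N)
    (pi : state n -> R) :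
  stationary_distribution R n k pi ->
  (\esum_(x in [set: state n]) (pi x * (vnorm n x)%:R)%:E < +oo)%E.
Proof.
move=> hpi; have [pi_ge0 [pi_sum1 _]] := hpi.
have k_half_ge0 : 0 <= k%:R / 2 :> R by rewrite divr_ge0.
apply: le_lt_trans (ltry (k%:R / 2 * n.-1%:R)).
apply: (esum_mu_le_drift pi_ge0 pi_sum1 (step_le R n k hn hk) (step_cst R n k hn hk)
  (step_invariant R n k hn hk pi hpi) _ _ _ (step_lyap_drift R n k hn hk)) => [x|//|].
- by rewrite mulr_ge0 ?lyap_ge0.
- by rewrite mulr_ge0.
Qed.
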